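(* Let $S\subsetneq\mathbb{S}$ (possibly empty) and for $q\in(0,1)$ write $v_i(q)=V(qe^{\theta_i-1})$ for $i\in S$. Define $$F_S(q)=-\log q+\sum_{i\in S}\frac{v_i(q)}{1-v_i(q)}+\frac{1-q-\sum_{i\in S}v_i(q)}{q+\sum_{i\in S}v_i(q)}.$$ Then $F_S$ is strictly decreasing on $(0,\bar q_0(S)]$.
   Context: Sellers $\mathbb{S}=\{1,\dots,n\}$ with product qualities $\theta_i\ge0$. $V:(0,\infty)\to(0,1)$ is defined by $V(x)=$ the unique $v\in(0,1)$ with $v\exp(v/(1-v))=x$. For nonempty $S\subseteq\mathbb{S}$, $\bar q_0(S)\in(0,1)$ is the unique solution of $\sum_{i\in S}V(\bar q_0e^{\theta_i-1})=1-\bar q_0$; $\bar q_0(\emptyset)=1$. (For $j\notin S$, $F_S(\bar q_0(S\cup\{j\}))$ equals the Bertrand equilibrium social welfare when $S\cup\{j\}$ is displayed, and $F_S(\bar q_0(S))$ equals that when $S$ is displayed.) *)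

From Stdlib Require Import Reals Lra List ClassicalEpsilon.
Open Scope R_scope.

Definition V (x : R) : R :=
  epsilon (inhabits 0) (fun v => 0 < v < 1 /\ v * exp (v / (1 - v)) = x).

(* Sum over a finite set of sellers represented as a duplicate-free list. *)
Definition sumS (S : list nat) (f : nat -> R) : R :=
  fold_right Rplus 0 (map f S).

Definition vi (theta : nat -> R) (i : nat) (q : R) : R :=
  V (q * exp (theta i - 1)).

Definition qbar0 (theta : nat -> R) (S : list nat) : R :=
  match S with
  | nil => 1
  | _ => epsilon (inhabits 0)
           (fun q => 0 < q < 1 /\ sumS S (fun i => vi theta i q) = 1 - q)
  end.

Definition F (theta : nat -> R) (S : list nat) (q : R) : R :=
  - ln q
  + sumS S (fun i => vi theta i q / (1 - vi theta i q))
  + (1 - q - sumS S (fun i => vi theta i q))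
    / (q + sumS S (fun i => vi theta i q)).

From Stdlib Require Import Reals Lra List ClassicalEpsilon.
From Coquelicot Require Import Coquelicot.
Open Scope R_scope.

(* V is the inverse of W(v) = v e^{v/(1-v)} on (0,1); W is a smooth increasing
   bijection (0,1) -> (0,oo), so V is differentiable with x V'(x) = E(V x), where
   E(v) = v(1-v)^2 / D(v) and D(v) = (1-v)^2 + v.  Writing v_i = v_i(q),
   t = q + sum v_i, A = sum E(v_i) and P = sum phi(v_i) with
   phi(v) = v^2 (2-v) / D(v) (so that E(v)/(1-v)^2 = E(v) + phi(v)), one gets
       q F_S'(q) = -1 + A + P - (q + A) / t^2.
   The function phi is superadditive on [0,1] with phi(1) = 1, so P <= 1 as soon
   as sum v_i <= 1; and for q <= qbar0(S) monotonicity of V gives t <= 1.  Then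
   (A + P) t^2 <= t^2 + A and the numerator above is at most -q < 0.  The mean
   value theorem concludes. *)

Definition W (v : R) : R := v * exp (v / (1 - v)).
Definition dW (v : R) : R := exp (v / (1 - v)) * (1 + v / ((1 - v) * (1 - v))).

Lemma is_derive_continuity f x l : is_derive f x l -> continuity_pt f x.
Proof.
  intros H. apply derivable_continuous_pt. exists l. now apply is_derive_Reals.
Qed.

Lemma W_deriv v : v < 1 -> is_derive W v (dW v).
Proof.
  intros Hv. unfold W, dW. auto_derive.
  - lra.
  - unfold Rminus, Rdiv. field. lra.
Qed.

Lemma dW_pos v : 0 < v < 1 -> 0 < dW v.
Proof.
  intros Hv. unfold dW. apply Rmult_lt_0_compat; [apply exp_pos |].
  assert (0 < v / ((1 - v) * (1 - v))) by (apply Rdiv_lt_0_compat; nra).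
  lra.
Qed.

Lemma W_incr a b : 0 < a -> a < b -> b < 1 -> W a < W b.
Proof.
  intros Ha Hab Hb. unfold W.
  assert (Hfrac : a / (1 - a) < b / (1 - b)).
  { apply (Rmult_lt_reg_r ((1 - a) * (1 - b))); [nra |].
    replace (a / (1 - a) * ((1 - a) * (1 - b))) with (a * (1 - b)) by (field; lra).
    replace (b / (1 - b) * ((1 - a) * (1 - b))) with (b * (1 - a)) by (field; lra).
    nra. }
  pose proof (exp_increasing _ _ Hfrac).
  pose proof (exp_pos (a / (1 - a))). nra.
Qed.

Lemma W_ge v : 0 < v < 1 -> v <= W v.
Proof.
  intros Hv. unfold W.
  assert (0 <= v / (1 - v)) by (apply Rdiv_le_0_compat; lra).
  assert (1 <= exp (v / (1 - v))).
  { destruct (Req_dec (v / (1 - v)) 0) as [E | E].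
    - rewrite E, exp_0. lra.
    - pose proof (exp_ineq1 (v / (1 - v))). lra. }
  nra.
Qed.

(* W maps (0,1) onto (0,oo): intermediate value theorem on [min(1/2,x/4), (x+1)/(x+2)]. *)
Lemma W_surj x : 0 < x -> exists v, 0 < v < 1 /\ W v = x.
Proof.
  intros Hx.
  set (a := Rmin (1/2) (x/4)). set (b := (x + 1) / (x + 2)).
  assert (Ha : 0 < a <= 1/2) by (unfold a; split; [apply Rmin_glb_lt | apply Rmin_l]; lra).
  assert (Ha4 : a <= x/4) by apply Rmin_r.
  assert (Hb : 1/2 < b < 1).
  { unfold b. split; apply (Rmult_lt_reg_r (x + 2)); try lra; field_simplify; lra. }
  assert (Wa : W a < x).
  { unfold W.
    assert (a / (1 - a) <= 1) by (apply (Rmult_le_reg_r (1 - a)); [lra |]; field_simplify; lra).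
    assert (exp (a / (1 - a)) <= exp 1).
    { destruct (Req_dec (a / (1 - a)) 1) as [E | E];
        [rewrite E; lra | left; apply exp_increasing; lra]. }
    pose proof exp_le_3.
    assert (a * exp (a / (1 - a)) <= a * 3) by (apply Rmult_le_compat_l; lra). lra. }
  assert (Wb : x < W b).
  { unfold W. replace (b / (1 - b)) with (x + 1) by (unfold b; field; lra).
    pose proof (exp_ineq1 (x + 1) ltac:(lra)).
    replace x with (b * (1 + (x + 1)) - 1) at 1 by (unfold b; field; lra).
    assert (b * (1 + (x + 1)) < b * exp (x + 1)) by (apply Rmult_lt_compat_l; lra). lra. }
  destruct (Ranalysis5.IVT_interv (fun v => W v - x) a b) as [z [Hz Ez]]; try lra.
  - intros y Hy. apply continuity_pt_minus; [| apply continuity_pt_const; now intros u w].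
    apply (is_derive_continuity _ _ _ (W_deriv y ltac:(lra))).
  - exists z. lra.
Qed.

Lemma V_spec x : 0 < x -> 0 < V x < 1 /\ W (V x) = x.
Proof. intros Hx. unfold V. apply epsilon_spec. now apply W_surj. Qed.

Lemma V_incr x y : 0 < x -> x < y -> V x < V y.
Proof.
  intros Hx Hxy. destruct (V_spec x Hx) as [Vx Wx], (V_spec y ltac:(lra)) as [Vy Wy].
  destruct (Rtotal_order (V x) (V y)) as [H | [H | H]]; auto.
  - rewrite H in Wx. lra.
  - pose proof (W_incr (V y) (V x) ltac:(lra) H ltac:(lra)). lra.
Qed.

Lemma V_le_mono x y : 0 < x -> x <= y -> V x <= V y.
Proof.
  intros Hx Hxy. destruct (Req_dec x y) as [-> | Hne]; [lra |].
  left. apply V_incr; lra.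
Qed.

Lemma V_le x : 0 < x -> V x <= x.
Proof. intros Hx. destruct (V_spec x Hx) as [HV HW]. pose proof (W_ge _ HV). lra. Qed.

Lemma V_cont x : 0 < x -> continuity_pt V x.
Proof.
  intros Hx.
  destruct (V_spec (x/2)) as [A1 A2]; [lra |].
  destruct (V_spec (2*x)) as [B1 B2]; [lra |].
  apply (Ranalysis5.continuity_pt_recip_interv W V (V (x/2)) (V (2*x))).
  - apply V_incr; lra.
  - intros u w H1 H2 H3. apply W_incr; lra.
  - intros y H1 H2. rewrite A2 in H1. unfold comp, id. apply V_spec. lra.
  - intros y H1 H2. rewrite A2 in H1. rewrite B2 in H2. split; apply V_le_mono; lra.
  - intros a Ha. apply (is_derive_continuity _ _ _ (W_deriv a ltac:(lra))).
  - rewrite A2, B2. lra.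
Qed.

Definition D (v : R) : R := (1 - v) * (1 - v) + v.
Definition E (v : R) : R := v * ((1 - v) * (1 - v)) / D v.
Definition phi (v : R) : R := v * v * (2 - v) / D v.

Lemma D_pos v : 0 <= v <= 1 -> 0 < D v.
Proof. intros. unfold D. nra. Qed.

Lemma E_nonneg v : 0 <= v <= 1 -> 0 <= E v.
Proof.
  intros Hv. unfold E. apply Rdiv_le_0_compat; [| now apply D_pos].
  apply Rmult_le_pos; nra.
Qed.

Lemma inv_dW v : 0 < v < 1 -> 1 / dW v = E v / W v.
Proof.
  intros Hv. unfold E, D, W, dW.
  pose proof (exp_pos (v / (1 - v))).
  assert (0 < (1 - v) * (1 - v)) by nra.
  field. repeat split; nra.
Qed.

(* x V'(x) = E(V x): the inverse function rule, rewritten with W(V x) = x. *)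
Lemma V_deriv x : 0 < x -> is_derive V x (E (V x) / x).
Proof.
  intros Hx.
  destruct (V_spec (2*x)) as [B1 _]; [lra |].
  destruct (V_spec x) as [C1 C2]; [lra |].
  assert (Prf : forall a, V (x/2) <= a <= V (2*x) -> derivable_pt W a).
  { intros a Ha. exists (dW a). apply is_derive_Reals, W_deriv. lra. }
  assert (Hrange : V (x/2) <= V x <= V (2*x)) by (split; apply V_le_mono; lra).
  assert (Hder : derive_pt W (V x) (Prf (V x) Hrange) = dW (V x)).
  { apply derive_pt_eq_0, is_derive_Reals, W_deriv. lra. }
  replace (E (V x) / x) with (1 / derive_pt W (V x) (Prf (V x) Hrange))
    by (rewrite Hder, inv_dW, C2; auto).
  apply is_derive_Reals.
  apply (Ranalysis5.derivable_pt_lim_recip_interv W V (x/2) (2*x) x Prf (V_cont x Hx)); try lra.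
  - intros y Hy. unfold comp, id. apply V_spec. lra.
  - rewrite Hder. pose proof (dW_pos (V x) C1). lra.
Qed.

(* Splitting of the derivative of v/(1-v): (E/(1-v)^2) = E + phi. *)
Lemma E_div_sq v : 0 <= v < 1 -> E v / ((1 - v) * (1 - v)) = E v + phi v.
Proof.
  intros Hv. unfold E, phi. pose proof (D_pos v ltac:(lra)).
  field. split; nra.
Qed.

(* phi is superadditive on [0,1]: the difference factors with visibly nonnegative factors. *)
Lemma phi_superadd a b : 0 <= a -> 0 <= b -> a + b <= 1 -> phi a + phi b <= phi (a + b).
Proof.
  intros Ha Hb Hab.
  pose proof (D_pos a ltac:(lra)). pose proof (D_pos b ltac:(lra)).
  pose proof (D_pos (a + b) ltac:(lra)).
  assert (Hdiff : phi (a + b) - phi a - phi b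
     = a * b * (1 - a - b) * (b * b - b + 4 + (b * b - 1) * a + (1 + b) * a * a)
       / (D a * D b * D (a + b))).
  { unfold phi. unfold D in *. field. repeat split; lra. }
  assert (0 <= a * b * (1 - a - b) * (b * b - b + 4 + (b * b - 1) * a + (1 + b) * a * a)
       / (D a * D b * D (a + b))).
  { apply Rdiv_le_0_compat; [| apply Rmult_lt_0_compat; [apply Rmult_lt_0_compat |]; lra].
    apply Rmult_le_pos; [apply Rmult_le_pos; [apply Rmult_le_pos |] |]; try lra.
    assert (0 <= (b * b - 1) * a + 1) by nra. nra. }
  lra.
Qed.

Lemma phi_le1 s : 0 <= s <= 1 -> phi s <= 1.
Proof.
  intros Hs. unfold phi. pose proof (D_pos s Hs).
  apply (Rmult_le_reg_r (D s)); auto.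
  unfold Rdiv. rewrite Rmult_assoc, Rinv_l by lra. unfold D.
  assert (0 <= (1 - s) * (1 - s) * (1 + s)) by (apply Rmult_le_pos; nra). nra.
Qed.

Lemma numerator_neg q t A P :
  0 < q -> 0 < t <= 1 -> 0 <= A -> P <= 1 -> - 1 + A + P - (q + A) / (t * t) < 0.
Proof.
  intros Hq Ht HA HP.
  assert (t * t <= 1) by nra.
  replace (- 1 + A + P - (q + A) / (t * t))
    with ((- (t * t) + (A + P) * (t * t) - (q + A)) / (t * t)) by (field; lra).
  apply Rdiv_neg_pos; [| nra].
  assert ((A + P) * (t * t) <= (A + 1) * (t * t)) by (apply Rmult_le_compat_r; nra).
  assert (A * (t * t) <= A) by nra. lra.
Qed.

Lemma sumS_plus l f g : sumS l (fun i => f i + g i) = sumS l f + sumS l g.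
Proof. unfold sumS. induction l as [| i l IH]; simpl; [| rewrite IH]; lra. Qed.

Lemma sumS_div l f c : sumS l (fun i => f i / c) = sumS l f / c.
Proof. unfold sumS, Rdiv. induction l as [| i l IH]; simpl; [| rewrite IH]; lra. Qed.

Lemma sumS_scal l f k : sumS l (fun i => k * f i) = k * sumS l f.
Proof. unfold sumS. induction l as [| i l IH]; simpl; [| rewrite IH]; lra. Qed.

Lemma sumS_le l f g : (forall i, In i l -> f i <= g i) -> sumS l f <= sumS l g.
Proof.
  unfold sumS. induction l as [| i l IH]; simpl; intros H; [lra |].
  pose proof (H i (or_introl eq_refl)).
  pose proof (IH (fun j Hj => H j (or_intror Hj))). lra.
Qed.

Lemma sumS_nonneg l f : (forall i, In i l -> 0 <= f i) -> 0 <= sumS l f.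
Proof.
  intros H. replace 0 with (sumS l (fun _ => 0)).
  - now apply sumS_le.
  - clear H. unfold sumS. induction l as [| i l IH]; simpl; [| rewrite IH]; lra.
Qed.

Lemma sumS_deriv l (f : nat -> R -> R) df x :
  (forall i, In i l -> is_derive (f i) x (df i)) ->
  is_derive (fun q => sumS l (fun i => f i q)) x (sumS l df).
Proof.
  unfold sumS. induction l as [| i l IH]; simpl; intros H.
  - auto_derive; auto.
  - apply (is_derive_plus (f i) (fun q => fold_right Rplus 0 (map (fun j => f j q) l))).
    + apply H. now left.
    + apply IH. intros j Hj. apply H. now right.
Qed.

Lemma sumS_phi_le l f : (forall i, In i l -> 0 <= f i) -> sumS l f <= 1 ->
  sumS l (fun i => phi (f i)) <= phi (sumS l f).
Proof.
  induction l as [| i l IH]; intros Hf Hs.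
  - unfold sumS, phi. simpl. rewrite !Rmult_0_l. unfold Rdiv. rewrite Rmult_0_l. lra.
  - change (sumS (i :: l) f) with (f i + sumS l f) in *.
    change (sumS (i :: l) (fun j => phi (f j))) with (phi (f i) + sumS l (fun j => phi (f j))).
    assert (Hf' : forall j, In j l -> 0 <= f j) by (intros j Hj; apply Hf; now right).
    pose proof (Hf i (or_introl eq_refl)) as Hfi.
    pose proof (sumS_nonneg l f Hf') as Hl.
    pose proof (IH Hf' ltac:(lra)).
    pose proof (phi_superadd (f i) _ Hfi Hl Hs). lra.
Qed.

Lemma vi_bounds theta i q : 0 < q -> 0 < vi theta i q < 1.
Proof. intros Hq. apply V_spec, Rmult_lt_0_compat; [exact Hq | apply exp_pos]. Qed.

Lemma vi_le_mono theta i q1 q2 : 0 < q1 -> q1 <= q2 -> vi theta i q1 <= vi theta i q2.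
Proof.
  intros Hq1 Hq12. pose proof (exp_pos (theta i - 1)).
  apply V_le_mono; [apply Rmult_lt_0_compat | apply Rmult_le_compat_r]; lra.
Qed.

Lemma vi_deriv theta i q : 0 < q -> is_derive (vi theta i) q (E (vi theta i q) / q).
Proof.
  intros Hq. unfold vi. set (c := exp (theta i - 1)).
  assert (Hc : 0 < c) by apply exp_pos.
  assert (Hlin : is_derive (fun q => q * c) q c) by (auto_derive; [auto | ring]).
  pose proof (is_derive_comp V (fun q => q * c) q _ _
                (V_deriv (q * c) ltac:(nra)) Hlin) as H.
  replace (E (V (q * c)) / q) with (scal c (E (V (q * c)) / (q * c))); [exact H |].
  unfold scal; simpl; unfold mult; simpl. field. lra.
Qed.

Lemma vi_sum_cont theta S q : 0 < q -> continuity_pt (fun q => sumS S (fun i => vi theta i q)) q.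
Proof.
  intros Hq. eapply is_derive_continuity.
  apply (sumS_deriv S (vi theta)). intros i _. now apply vi_deriv.
Qed.

Lemma is_derive_odds (u : R -> R) q du : u q < 1 -> is_derive u q du ->
  is_derive (fun q => u q / (1 - u q)) q (du / ((1 - u q) * (1 - u q))).
Proof.
  intros Hu Hd. auto_derive.
  - repeat split; auto; try (exists du; exact Hd). lra.
  - replace (Derive (fun x => u x) q) with du by (symmetry; now apply is_derive_unique).
    field. lra.
Qed.

Lemma is_derive_F_shape (h s : R -> R) q dh ds :
  0 < q -> 0 < q + s q -> is_derive h q dh -> is_derive s q ds ->
  is_derive (fun q => - ln q + h q + (1 - q - s q) / (q + s q)) q
            (- / q + dh - (1 + ds) / ((q + s q) * (q + s q))).
Proof.
  intros Hq Ht Hh Hs. auto_derive.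
  - repeat split; auto; try (exists dh; exact Hh); try (exists ds; exact Hs). lra.
  - replace (Derive (fun x => h x) q) with dh by (symmetry; now apply is_derive_unique).
    replace (Derive (fun x => s x) q) with ds by (symmetry; now apply is_derive_unique).
    field. lra.
Qed.

Definition Fd (theta : nat -> R) (S : list nat) (q : R) : R :=
  let t := q + sumS S (fun i => vi theta i q) in
  let A := sumS S (fun i => E (vi theta i q)) in
  let P := sumS S (fun i => phi (vi theta i q)) in
  (- 1 + A + P - (q + A) / (t * t)) / q.

Lemma F_deriv theta S q : 0 < q -> is_derive (F theta S) q (Fd theta S q).
Proof.
  intros Hq.
  assert (Hv : forall i, 0 < vi theta i q < 1) by (intros; now apply vi_bounds).
  assert (Hs : 0 <= sumS S (fun i => vi theta i q))
    by (apply sumS_nonneg; intros i _; specialize (Hv i); lra).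
  assert (Hodds : is_derive (fun q => sumS S (fun i => vi theta i q / (1 - vi theta i q))) q
                    (sumS S (fun i => (E (vi theta i q) + phi (vi theta i q)) / q))).
  { apply (sumS_deriv S (fun i q => vi theta i q / (1 - vi theta i q))). intros i _.
    specialize (Hv i).
    replace ((E (vi theta i q) + phi (vi theta i q)) / q)
      with (E (vi theta i q) / q / ((1 - vi theta i q) * (1 - vi theta i q))).
    - apply is_derive_odds; [lra | now apply vi_deriv].
    - rewrite <- E_div_sq by lra. field. nra. }
  assert (Hsum : is_derive (fun q => sumS S (fun i => vi theta i q)) q
                   (sumS S (fun i => E (vi theta i q) / q)))
    by (apply (sumS_deriv S (vi theta)); intros i _; now apply vi_deriv).
  pose proof (is_derive_F_shape _ (fun q => sumS S (fun i => vi theta i q)) q _ _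
                Hq ltac:(lra) Hodds Hsum) as HF.
  unfold Fd. rewrite !sumS_div, sumS_plus in HF.
  match goal with HF : is_derive _ q ?l |- is_derive _ q ?l' => replace l' with l end.
  - exact HF.
  - field. lra.
Qed.

Lemma Fd_neg theta S q :
  0 < q -> q + sumS S (fun i => vi theta i q) <= 1 -> Fd theta S q < 0.
Proof.
  intros Hq Ht.
  assert (Hv : forall i, In i S -> 0 <= vi theta i q)
    by (intros i _; pose proof (vi_bounds theta i q Hq); lra).
  assert (Hs : 0 <= sumS S (fun i => vi theta i q)) by now apply sumS_nonneg.
  assert (HA : 0 <= sumS S (fun i => E (vi theta i q))).
  { apply sumS_nonneg. intros i _. pose proof (vi_bounds theta i q Hq).
    apply E_nonneg. lra. }
  assert (HP : sumS S (fun i => phi (vi theta i q)) <= 1).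
  { pose proof (sumS_phi_le S (fun i => vi theta i q) Hv ltac:(lra)).
    pose proof (phi_le1 (sumS S (fun i => vi theta i q)) ltac:(lra)). lra. }
  unfold Fd. apply Rdiv_neg_pos; [| lra].
  apply numerator_neg; lra.
Qed.

(* qbar0 is well defined for nonempty S: intermediate value theorem for
   sum v_i(q) + q - 1 on [a, 1] with a = 1/(2(1 + sum e^{theta_i - 1})), using V(x) <= x. *)
Lemma qbar0_exists theta i l :
  exists q, 0 < q < 1 /\ sumS (i :: l) (fun j => vi theta j q) = 1 - q.
Proof.
  set (K := sumS (i :: l) (fun j => exp (theta j - 1))).
  assert (HK : 0 <= K) by (apply sumS_nonneg; intros; left; apply exp_pos).
  set (a := / (2 * (1 + K))).
  assert (Ha : 0 < a <= 1/2).
  { unfold a. split; [apply Rinv_0_lt_compat; lra |].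
    apply (Rmult_le_reg_r (2 * (1 + K))); [lra |]. rewrite Rinv_l by lra. nra. }
  assert (Hsa : sumS (i :: l) (fun j => vi theta j a) <= a * K).
  { unfold K. rewrite <- sumS_scal. apply sumS_le. intros j _.
    apply V_le, Rmult_lt_0_compat; [lra | apply exp_pos]. }
  assert (HaK : a * K + a = 1/2) by (unfold a; field; lra).
  assert (H1 : 0 < sumS (i :: l) (fun j => vi theta j 1)).
  { change (0 < vi theta i 1 + sumS l (fun j => vi theta j 1)).
    pose proof (vi_bounds theta i 1 Rlt_0_1).
    assert (0 <= sumS l (fun j => vi theta j 1)).
    { apply sumS_nonneg. intros j _. pose proof (vi_bounds theta j 1 Rlt_0_1). lra. }
    lra. }
  destruct (Ranalysis5.IVT_interv
              (fun q => sumS (i :: l) (fun j => vi theta j q) + q - 1) a 1) as [z [Hz Ez]];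
    simpl; try lra.
  - intros y Hy. apply continuity_pt_minus; [apply continuity_pt_plus |].
    + apply vi_sum_cont. lra.
    + apply continuity_pt_id.
    + apply continuity_pt_const. now intros u w.
  - exists z. destruct (Req_dec z 1) as [-> | Hz1]; lra.
Qed.

Lemma total_le1 theta S q :
  0 < q -> q <= qbar0 theta S -> q + sumS S (fun i => vi theta i q) <= 1.
Proof.
  intros Hq Hqb. destruct S as [| i l].
  - simpl in Hqb. unfold sumS. simpl. lra.
  - destruct (epsilon_spec (inhabits 0)
                (fun q => 0 < q < 1 /\ sumS (i :: l) (fun j => vi theta j q) = 1 - q)
                (qbar0_exists theta i l)) as [Hb Hsum].
    fold (qbar0 theta (i :: l)) in Hb, Hsum.
    assert (sumS (i :: l) (fun j => vi theta j q)
            <= sumS (i :: l) (fun j => vi theta j (qbar0 theta (i :: l)))).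
    { apply sumS_le. intros j _. now apply vi_le_mono. }
    lra.
Qed.

Theorem lemma3 (n : nat) (theta : nat -> R)
  (Htheta : forall i, In i (seq 1 n) -> 0 <= theta i)
  (S : list nat)
  (HSnd : NoDup S)
  (HSsub : incl S (seq 1 n))
  (HSproper : exists j, In j (seq 1 n) /\ ~ In j S) :
  forall q1 q2, 0 < q1 -> q1 < q2 -> q2 <= qbar0 theta S ->
    F theta S q2 < F theta S q1.
Proof.
  intros q1 q2 Hq1 Hq12 Hq2.
  destruct (MVT_gen (F theta S) q1 q2 (Fd theta S)) as [c [Hc Hmvt]];
    rewrite ?Rmin_left, ?Rmax_right in * by lra.
  - intros x Hx. apply F_deriv. lra.
  - intros x Hx. apply (is_derive_continuity _ _ _ (F_deriv theta S x ltac:(lra))).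
  - assert (Hneg : Fd theta S c < 0) by (apply Fd_neg, total_le1; lra).
    assert (Fd theta S c * (q2 - q1) < 0) by nra.
    lra.
Qed.
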